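(* Let $t<n$, let $\mathcal{E}$ be an information exchange and $P$ a decision protocol for the hard crash context $(\mathcal{E},\mathit{Crash}_t)$ such that SBA($\mathcal{N}$) is valid in $\mathcal{I}_{P,\mathcal{E},\mathit{Crash}_t}$. Then for every agent $i$ and value $v$, the formulas $C_{\mathcal{A}}(\mathtt{decides}_{\mathcal{A}}(v))\Leftrightarrow CB_{\mathcal{N}}(\mathtt{decides}_{\mathcal{N}}(v))$ and $i\in\mathcal{A}\Rightarrow\big(K_i C_{\mathcal{A}}(\mathtt{decides}_{\mathcal{A}}(v))\Leftrightarrow B^{\mathcal{N}}_i CB_{\mathcal{N}}(\mathtt{decides}_{\mathcal{N}}(v))\big)$ are valid in $\mathcal{I}_{P,\mathcal{E},\mathit{Crash}_t}$.
   Context: Agents $\mathrm{Agt}=\{1,\dots,n\}$; decision values $V$; actions $A_i=\{\mathtt{noop}\}\cup\{\mathtt{decide}_i(v):v\in V\}$. An information exchange $\mathcal{E}$ gives each agent $i$ a tuple $(L_i,I_i,M_i,\mu_i,\delta_i)$: local states $L_i$ of the form $\langle\mathit{init}_i,\mathit{time}_i,\dots\rangle$ ($\mathit{init}_i\in V$ the initial preference) together with a distinguished state $\mathit{crashed}$; initial states $I_i$; messages $M_i\ni\bot$; $\mu_i:L_i\times A_i\to(\mathrm{Agt}\to M_i)$; $\delta_i:L_i\times A_i\times\prod_jM_j\to L_i$ (preserving $\mathit{init}_i$, incrementing $\mathit{time}_i$). A decision protocol is $P=(P_i:L_i\to A_i)_i$; in the hard crash model $P_i(\mathit{crashed})=\mathtt{noop}$.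 A failure model $(L^*_e,I_e,\delta_e,\mathit{Adv})$ has environment states, initial ones, update $\delta_e:L^*_e\times\prod_iA_i\to L^*_e$, adversaries $(\Delta^t,\Delta^r,\Delta^s)$, $\Delta^t,\Delta^r:\mathbb{N}\times\mathrm{Agt}\times\mathrm{Agt}\times\bigcup_iM_i\to\bigcup_iM_i$, $\Delta^s_i:\mathbb{N}\times L_i\to L_i$. Runs $r$ of $\mathcal{I}_{P,\mathcal{E},\mathcal{F}}$: $r(0)=((s_e,\alpha),s_1,\dots,s_n)$ with $s_e\in I_e,\alpha\in\mathit{Adv},s_i\in I_i$; from $r(k)=((s_e,\alpha),s_1,\dots,s_n)$, $r(k+1)=((\delta_e(s_e,(a_1,\dots,a_n)),\alpha),s'_1,\dots,s'_n)$ with $a_i=P_i(s_i)$, $m_{i,j}=\mu_i(s_i,a_i)(j)$, $m'_{i,j}=\Delta^r(k,i,j,\Delta^t(k,i,j,m_{i,j}))$, $s^*_j=\delta_j(s_j,a_j,(m'_{1,j},\dots,m'_{n,j}))$, $s'_j=\Delta^s_j(k,s^*_j)$. $\mathit{Crash}_t$: adversaries in which at most $t$ agents crash; $\Delta^r(k,i,j,m)=m$ always; an agent $i$ crashing in round $k+1$ has $\Delta^s_i(k',s)=\mathit{crashed}$ for all $s$ and $k'\ge k$, some $J\subseteq\mathrm{Agt}$ with $\Delta^t(k,i,j,m)=\bot$ for $j\in J$ and $=m$ otherwise, and $\Delta^t(k',i,j,m)=\bot$ for all $j$ and $k'>k$; otherwise $\Delta^s_i$ and $\Delta^t(\cdot,i,\cdot,\cdot)$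 act as identity. An agent has a fault in a round if its sent messages are altered, its received messages altered, or its updated state altered. $\mathcal{N}(r,m)$ = agents with no fault in any round of $r$; $\mathcal{A}(r,m)$ = agents with no fault in rounds $1..m$. $\mathtt{decides}_i(v)$ holds at $(r,m)$ iff $P_i(r_i(m))=\mathtt{decide}_i(v)$; $\mathtt{decides}_S(v):=\bigwedge_{i\in S}\mathtt{decides}_i(v)$. $(r,m)\sim_i(r',m')$ iff $r_i(m)=r'_i(m')$; $K_i\phi$ holds iff $\phi$ holds at all $\sim_i$-related points. For an indexical set $S$: $B^S_i\phi:=K_i(i\in S\Rightarrow\phi)$, $E^B_S\phi:=\bigwedge_{i\in S}B^S_i\phi$, $E_S\phi:=\bigwedge_{i\in S}K_i\phi$, $CB_S\phi:=\bigwedge_{k\ge1}(E^B_S)^k\phi$, $C_S\phi:=\bigwedge_{k\ge1}E_S^k\phi$. SBA($\mathcal{N}$) valid means in every run: each agent decides at most once; if $i\in\mathcal{N}(r,m)$ performs $\mathtt{decide}_i(v)$ at time $m$ then every $j\in\mathcal{N}(r,m)$ performs $\mathtt{decide}_j(v)$ at time $m$; and then some agent has initial preference $v$. *)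

From mathcomp Require Import all_boot.

(* Actions A_i = {noop} U {decide_i(v) : v in V}; the agent index is implicit. *)
Inductive action (V : Type) : Type :=
  | noop : action V
  | decide : V -> action V.
Arguments noop {V}.
Arguments decide {V} _.

(* All agents' local states live in one type [lst] (agent-indexed functions
   select the relevant components), and all messages in one type [msg]
   (playing the role of the union of the M_i). *)
Record InfoExchange (n : nat) (V : Type) := {
  lst : Type;
  msg : Type;
  bot : msg;
  crashed : lst;
  init : 'I_n -> lst -> V;
  time : 'I_n -> lst -> nat;
  initial : 'I_n -> lst -> Prop;
  mu : 'I_n -> lst -> action V -> ('I_n -> msg);
  delta : 'I_n -> lst -> action V -> ('I_n -> msg) -> lst;
  initial_ok : forall i s, initial i s -> s <> crashed /\ time i s = 0;
  delta_ok : forall i s a ms, s <> crashed ->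
    [/\ delta i s a ms <> crashed,
        init i (delta i s a ms) = init i s &
        time i (delta i s a ms) = (time i s).+1]
}.
Arguments lst {n V}. Arguments msg {n V}. Arguments bot {n V}.
Arguments crashed {n V}. Arguments init {n V}. Arguments time {n V}.
Arguments initial {n V}. Arguments mu {n V}. Arguments delta {n V}.

Record adversary (n : nat) (M L : Type) := {
  dt : nat -> 'I_n -> 'I_n -> M -> M;
  dr : nat -> 'I_n -> 'I_n -> M -> M;
  ds : 'I_n -> nat -> L -> L
}.
Arguments dt {n M L}. Arguments dr {n M L}. Arguments ds {n M L}.

Section System.
Variables (n t : nat) (V : Type) (E : InfoExchange n V)
          (P : 'I_n -> lst E -> action V)
          (Le : Type) (Ie : Le -> Prop) (de : Le -> ('I_n -> action V) -> Le).

Definition adv := adversary n (msg E) (lst E).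

Definition crash_adv (a : adv) : Prop :=
  (forall k i j m, dr a k i j m = m) /\
  exists C : {set 'I_n}, #|C| <= t /\
    forall i, if i \in C then
      exists (k : nat) (J : {set 'I_n}),
        [/\ forall k' s, k' < k -> ds a i k' s = s,
            forall k' s, k <= k' -> ds a i k' s = crashed E,
            forall k' j m, k' < k -> dt a k' i j m = m,
            forall j m, dt a k i j m = (if j \in J then bot E else m) &
            forall k' j m, k < k' -> dt a k' i j m = bot E]
    else (forall k s, ds a i k s = s) /\ (forall k j m, dt a k i j m = m).

Definition gstate := ((Le * adv) * ('I_n -> lst E))%type.

Definition acts (g : gstate) (j : 'I_n) : action V := P j (g.2 j).
Definition sent (g : gstate) (i j : 'I_n) : msg E := mu E i (g.2 i) (acts g i) j.
Definition recv (k : nat) (g : gstate) (i j : 'I_n) : msg E :=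
  dr g.1.2 k i j (dt g.1.2 k i j (sent g i j)).
Definition sstar (k : nat) (g : gstate) (j : 'I_n) : lst E :=
  delta E j (g.2 j) (acts g j) (fun i => recv k g i j).

Definition step (k : nat) (g : gstate) : gstate :=
  ((de g.1.1 (acts g), g.1.2), fun j => ds g.1.2 j k (sstar k g j)).

Definition run := nat -> gstate.

Definition is_run (r : run) : Prop :=
  [/\ Ie (r 0).1.1, crash_adv (r 0).1.2,
      (forall i, initial E i ((r 0).2 i)) &
      forall k, r k.+1 = step k (r k)].

(* Agent i has a fault in round k+1 of r. *)
Definition fault (r : run) (k : nat) (i : 'I_n) : Prop :=
  let g := r k in let a := g.1.2 in
  (exists j, dt a k i j (sent g i j) <> sent g i j) \/
  (exists j, dr a k j i (dt a k j i (sent g j i)) <> dt a k j i (sent g j i)) \/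
  (ds a i k (sstar k g i) <> sstar k g i).

Definition point := (run * nat)%type.
Definition formula := point -> Prop.
Definition indexical := point -> 'I_n -> Prop.

Definition valid (phi : formula) : Prop := forall r m, is_run r -> phi (r, m).

Definition lstate (i : 'I_n) (p : point) : lst E := (p.1 p.2).2 i.

Definition Nset : indexical := fun p i => forall k, ~ fault p.1 k i.
Definition Aset : indexical := fun p i => forall k, k < p.2 -> ~ fault p.1 k i.

Definition Kn (i : 'I_n) (phi : formula) : formula := fun p =>
  forall r' m', is_run r' -> lstate i (r', m') = lstate i p -> phi (r', m').

Definition Bel (S : indexical) (i : 'I_n) (phi : formula) : formula :=
  Kn i (fun p => S p i -> phi p).

Definition EB (S : indexical) (phi : formula) : formula := fun p =>
  forall i, S p i -> Bel S i phi p.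

Definition Eall (S : indexical) (phi : formula) : formula := fun p =>
  forall i, S p i -> Kn i phi p.

Fixpoint iterF (F : formula -> formula) (k : nat) (phi : formula) : formula :=
  match k with 0 => phi | k'.+1 => F (iterF F k' phi) end.

Definition CB (S : indexical) (phi : formula) : formula := fun p =>
  forall k, 0 < k -> iterF (EB S) k phi p.

Definition CK (S : indexical) (phi : formula) : formula := fun p =>
  forall k, 0 < k -> iterF (Eall S) k phi p.

Definition decides (i : 'I_n) (v : V) : formula := fun p =>
  P i (lstate i p) = decide v.

Definition decidesS (S : indexical) (v : V) : formula := fun p =>
  forall i, S p i -> decides i v p.

Definition SBA_N_valid : Prop :=
  forall r, is_run r ->
    (forall i m m' v v', decides i v (r, m) -> decides i v' (r, m') -> m = m') /\
    (forall i m v, Nset (r, m) i -> decides i v (r, m) ->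
       (forall j, Nset (r, m) j -> decides j v (r, m)) /\
       exists j, init E j ((r 0).2 j) = v).

End System.

From mathcomp Require Import all_boot.
From Stdlib Require Import FunctionalExtensionality.

(** An agent belongs to A at time m exactly when its local state is not
    [crashed], so A is determined by the global state.  If i is in A at
    (r, m), then removing i from the crash set of the adversary yields a run
    with the same global states up to time m in which i and every agent of
    N(r, m) are nonfaulty.  Reviving the agent at both ends of an
    A-indistinguishability edge turns it into a chain of three N-belief edges;
    conversely every N-belief edge is an A-indistinguishability edge.  Hence
    C_A and CB_N quantify over the same points, which gives the first
    equivalence; the second follows since C_A only depends on the global
    state.  Neither SBA(N) nor the convention that crashed agents do [noop]
    is needed. *)

Set Implicit Arguments.
Unset Strict Implicit.

Fixpoint chain (T : Type) (R : T -> T -> Prop) (k : nat) (x y : T) : Prop :=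
  match k with 0 => y = x | k'.+1 => exists z, R x z /\ chain R k' z y end.

Lemma chain_cat T (R : T -> T -> Prop) a b x y z :
  chain R a x y -> chain R b y z -> chain R (a + b) x z.
Proof.
elim: a x => [|a IH] x /=; first by move=> ->.
by move=> [x' [Rxx' x'y]] yz; exists x'; split => //; apply: IH yz.
Qed.

Lemma chain_mono T (R R' : T -> T -> Prop) k x y :
  (forall u w, R u w -> R' u w) -> chain R k x y -> chain R' k x y.
Proof.
move=> subRR'; elim: k x => [|k IH] x //= [x' [Rxx' x'y]].
by exists x'; split; [apply: subRR' | apply: IH].
Qed.

Lemma chain_last T (R : T -> T -> Prop) (Q : T -> Prop) k x y :
  (forall u w, R u w -> Q w) -> chain R k.+1 x y -> Q y.
Proof.
move=> RQ; elim: k x => [|k IH] x /= [x' [Rxx' x'y]]; last exact: IH x'y.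
by rewrite x'y; apply: RQ Rxx'.
Qed.

Section CrashRuns.
Variables (n t : nat) (V : Type) (E : InfoExchange n V)
          (P : 'I_n -> lst E -> action V)
          (Le : Type) (Ie : Le -> Prop) (de : Le -> ('I_n -> action V) -> Le).

Local Notation isrun := (is_run n t V E P Le Ie de).
Local Notation point := (point n V E Le).
Local Notation formula := (formula n V E Le).
Local Notation indexical := (indexical n V E Le).
Local Notation gstate := (gstate n V E Le).
Local Notation adv := (adv n V E).
Local Notation A := (Aset n V E P Le).
Local Notation N := (Nset n V E P Le).
Local Notation fault := (fault n V E P Le).
Local Notation step := (step n V E P Le de).
Local Notation sstar := (sstar n V E P Le).
Local Notation lstate := (lstate n V E Le).
Local Notation crash_adv := (crash_adv n t V E).
Local Notation iterF := (iterF n V E Le).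
Local Notation Eall := (Eall n t V E P Le Ie de).
Local Notation EB := (EB n t V E P Le Ie de).
Local Notation CKA := (CK n t V E P Le Ie de A).
Local Notation CBN := (CB n t V E P Le Ie de N).

Lemma run_adv_const r k : isrun r -> (r k).1.2 = (r 0).1.2.
Proof. by case=> _ _ _ r_step; elim: k => // k IH; rewrite r_step. Qed.

Lemma sstar_not_crashed k g i : g.2 i <> crashed E -> sstar k g i <> crashed E.
Proof.
by case/(delta_ok _ _ E i _ (acts n V E P Le g i) (fun j => recv n V E P Le k g j i)).
Qed.

Lemma run_not_crashed r i k : isrun r ->
  (forall k' s, k' < k -> ds (r 0).1.2 i k' s = s) -> (r k).2 i <> crashed E.
Proof.
move=> r_run; have [_ _ r_init r_step] := r_run.
elim: k => [|k IH] ds_id; first by have [] := initial_ok _ _ E i _ (r_init i).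
rewrite r_step /= (run_adv_const k r_run) ds_id //.
by apply/sstar_not_crashed/IH => k' s /ltnW; apply: ds_id.
Qed.

Lemma no_fault r k x : isrun r ->
  (forall j m, dt (r 0).1.2 k x j m = m) -> (forall s, ds (r 0).1.2 x k s = s) ->
  ~ fault r k x.
Proof.
move=> r_run dt_id ds_id; have [_ [dr_id _] _ _] := r_run.
rewrite /fault (run_adv_const k r_run) ds_id.
by case=> [[j]|[[j]|]] //; rewrite ?dt_id ?dr_id.
Qed.

Lemma fault_at_crash_round r i k0 : isrun r ->
  (forall k s, k < k0 -> ds (r 0).1.2 i k s = s) ->
  (forall k s, k0 <= k -> ds (r 0).1.2 i k s = crashed E) -> fault r k0 i.
Proof.
move=> r_run ds_before ds_after; right; right.
rewrite (run_adv_const k0 r_run) ds_after // => /esym.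
exact/sstar_not_crashed/run_not_crashed.
Qed.

Lemma crashed_after_crash_round r i k0 k : isrun r ->
  (forall k s, k0 <= k -> ds (r 0).1.2 i k s = crashed E) -> k0 < k ->
  (r k).2 i = crashed E.
Proof.
move=> r_run ds_after; case: k => // k lt_k0k; have [_ _ _ r_step] := r_run.
by rewrite r_step /= (run_adv_const k r_run) ds_after.
Qed.

Lemma Aset_not_crashed r m i : isrun r -> A (r, m) i <-> (r m).2 i <> crashed E.
Proof.
move=> r_run; have [_ [_ [C [_ HC]]] _ _] := r_run.
move: (HC i); case: (i \in C); last first.
  by case=> ds_id dt_id; split=> [_|_ k _]; [apply: run_not_crashed | apply: no_fault].
case=> k0 [J [ds_before ds_after dt_before _ _]]; split=> [Ai|not_crashed k /= lt_km].
  have [le_mk0|lt_k0m] := leqP m k0.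
    by apply: run_not_crashed => // k s lt_km; apply/ds_before/(leq_trans lt_km).
  by case: (Ai k0 lt_k0m); apply: fault_at_crash_round.
have le_mk0 : m <= k0.
  rewrite leqNgt; apply/negP => lt_k0m.
  by case: not_crashed; apply: crashed_after_crash_round lt_k0m.
have lt_kk0 : k < k0 by apply: leq_trans lt_km le_mk0.
by apply: no_fault => // [j msg|s]; [apply: dt_before | apply: ds_before].
Qed.

Lemma Aset_lstate r r' m m' i : isrun r -> isrun r' ->
  lstate i (r', m') = lstate i (r, m) -> A (r, m) i -> A (r', m') i.
Proof.
move=> r_run r'_run same_state /(Aset_not_crashed _ _ r_run) Ai.
by apply/(Aset_not_crashed _ _ r'_run); move: same_state; rewrite /lstate /= => ->.
Qed.

Lemma Nset_Aset p i : N p i -> A p i.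
Proof. by move=> Ni k _; apply: Ni. Qed.

Lemma Nset_nonempty r m : t < n -> isrun r -> exists j, N (r, m) j.
Proof.
move=> lt_tn r_run; have [_ [_ [C [card_C HC]]] _ _] := r_run.
have [j jNC|all_in_C] := pickP [pred j | j \notin C].
  exists j => k; move: (HC j); rewrite (negbTE jNC) => -[ds_id dt_id].
  exact: no_fault.
have : [set: 'I_n] \subset C.
  by apply/subsetP => x _; move: (all_in_C x) => /= /negbFE.
move/subset_leq_card; rewrite cardsT card_ord => /leq_trans/(_ card_C).
by rewrite leqNgt lt_tn.
Qed.

Fixpoint run_from (g0 : gstate) (k : nat) : gstate :=
  match k with 0 => g0 | k'.+1 => step k' (run_from g0 k') end.

Lemma run_from_is_run g0 : Ie g0.1.1 -> crash_adv g0.1.2 ->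
  (forall i, initial E i (g0.2 i)) -> isrun (run_from g0).
Proof. by split. Qed.

Definition spare (a : adv) (i : 'I_n) : adv := {|
  dt := fun k x j msg => if x == i then msg else dt a k x j msg;
  dr := dr a;
  ds := fun x k s => if x == i then s else ds a x k s |}.

Lemma crash_adv_spare a i : crash_adv a -> crash_adv (spare a i).
Proof.
case=> dr_id [C [card_C HC]]; split=> //; exists (C :\ i); split.
  by apply: leq_trans card_C; apply/subset_leq_card/subsetDl.
move=> x; rewrite in_setD1 /=.
by case: (eqVneq x i) => [->|_] //=; apply: HC.
Qed.

(* No hypothesis on [dr] is needed: it is the identity in every crash run. *)
Lemma runs_agree r r' m : isrun r -> isrun r' ->
  (r' 0).1.1 = (r 0).1.1 -> (r' 0).2 = (r 0).2 ->
  (forall k x j msg, k < m -> dt (r' 0).1.2 k x j msg = dt (r 0).1.2 k x j msg) ->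
  (forall k x s, k < m -> ds (r' 0).1.2 x k s = ds (r 0).1.2 x k s) ->
  forall k, k <= m -> (r' k).1.1 = (r k).1.1 /\ (r' k).2 = (r k).2.
Proof.
move=> r_run r'_run same_env0 same_st0 same_dt same_ds.
have [_ [dr_id _] _ r_step] := r_run; have [_ [dr'_id _] _ r'_step] := r'_run.
elim=> [|k IH] lt_km; first by [].
have [same_env same_st] := IH (ltnW lt_km).
rewrite r_step r'_step /= /acts same_env same_st; split=> //.
apply: functional_extensionality => j.
rewrite (run_adv_const k r_run) (run_adv_const k r'_run) same_ds //.
rewrite /sstar /recv /sent /acts same_st (run_adv_const k r_run) (run_adv_const k r'_run).
congr (ds _ _ _ (delta _ _ _ _ _)); apply: functional_extensionality => x.
by rewrite dr_id dr'_id same_dt.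
Qed.

Lemma revive r m i : isrun r -> A (r, m) i ->
  exists r', [/\ isrun r', N (r', m) i, (r' m).2 = (r m).2 &
                 forall j, N (r, m) j -> N (r', m) j].
Proof.
move=> r_run Ai; have [init_env [_ [C [_ HC]]] r_init _] := r_run.
set a := (r 0).1.2.
have N_not_in_C j : N (r, m) j -> j \notin C.
  apply: contraPN => jC; move: (HC j); rewrite jC.
  case=> k0 [J [ds_before ds_after _ _ _]] /(_ k0); apply.
  exact: fault_at_crash_round.
case iC: (i \in C); last first.
  exists r; split=> // k; move: (HC i); rewrite iC => -[ds_id dt_id].
  exact: no_fault.
move: (HC i); rewrite iC => -[k0 [J [ds_before ds_after dt_before _ _]]].
have le_mk0 : m <= k0.
  rewrite leqNgt; apply/negP => lt_k0m.
  by case: (Ai k0 lt_k0m); apply: fault_at_crash_round.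
pose r' := run_from (((r 0).1.1, spare a i), (r 0).2).
have r'_run : isrun r'.
  by apply: run_from_is_run => //=; apply: crash_adv_spare; case: r_run.
have same_dt k x j msg : k < m -> dt (r' 0).1.2 k x j msg = dt a k x j msg.
  by move=> lt_km /=; case: eqP => // ->; rewrite dt_before // (leq_trans lt_km).
have same_ds k x s : k < m -> ds (r' 0).1.2 x k s = ds a x k s.
  by move=> lt_km /=; case: eqP => // ->; rewrite ds_before // (leq_trans lt_km).
have [_ same_st] := runs_agree r_run r'_run erefl erefl same_dt same_ds (leqnn m).
exists r'; split=> // [k|j Nj k]; first by apply: no_fault => //= *; rewrite eqxx.
move: (HC j); rewrite (negbTE (N_not_in_C j Nj)) => -[ds_id dt_id].
by apply: no_fault => //= *; case: eqP; rewrite ?dt_id ?ds_id.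
Qed.

Definition knows_edge (S : indexical) (p q : point) : Prop :=
  exists i, [/\ S p i, isrun q.1 & lstate i q = lstate i p].

Definition believes_edge (S : indexical) (p q : point) : Prop :=
  exists i, [/\ S p i, S q i, isrun q.1 & lstate i q = lstate i p].

Lemma iterF_chain (F : formula -> formula) (R : point -> point -> Prop) k phi p :
  (forall psi p, F psi p <-> forall q, R p q -> psi q) ->
  iterF F k phi p <-> forall q, chain R k p q -> phi q.
Proof.
move=> FR; elim: k p => [|k IH] p /=.
  by split=> [phi_p q ->|phi_all]; last exact: phi_all.
split=> [/FR phi_k q [p' [Rpp' p'q]]|phi_k]; first exact: (IH p').1 (phi_k p' Rpp') q p'q.
by apply/FR => p' Rpp'; apply/IH => q p'q; apply: phi_k; exists p'.
Qed.

Lemma Eall_knows_edge S phi p :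
  Eall S phi p <-> forall q, knows_edge S p q -> phi q.
Proof.
split=> [Ephi [r' m'] [i [Si r'_run same_state]]|edge_phi i Si r' m' r'_run same_state].
  exact: Ephi i Si r' m' r'_run same_state.
by apply: edge_phi; exists i.
Qed.

Lemma EB_believes_edge S phi p :
  EB S phi p <-> forall q, believes_edge S p q -> phi q.
Proof.
split=> [EBphi [r' m'] [i [Si Si' r'_run same_state]]|
         edge_phi i Si r' m' r'_run same_state Si'].
  exact: EBphi i Si r' m' r'_run same_state Si'.
by apply: edge_phi; exists i.
Qed.

Lemma iter_Eall_chain S k phi p :
  iterF (Eall S) k phi p <-> forall q, chain (knows_edge S) k p q -> phi q.
Proof. exact/iterF_chain/Eall_knows_edge. Qed.

Lemma iter_EB_chain S k phi p :
  iterF (EB S) k phi p <-> forall q, chain (believes_edge S) k p q -> phi q.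
Proof. exact/iterF_chain/EB_believes_edge. Qed.

Lemma believes_edge_N_knows_edge_A p q : believes_edge N p q -> knows_edge A p q.
Proof. by case=> i [Ni _ q_run same_state]; exists i; split=> //; apply: Nset_Aset. Qed.

Lemma believes_edge_same_state r r' m : t < n -> isrun r -> isrun r' ->
  (r' m).2 = (r m).2 -> (forall j, N (r, m) j -> N (r', m) j) ->
  believes_edge N (r, m) (r', m) /\ believes_edge N (r', m) (r, m).
Proof.
move=> lt_tn r_run r'_run same_st N_sub; have [j Nj] := Nset_nonempty m lt_tn r_run.
by split; exists j; split=> //; try exact: N_sub; rewrite /lstate /= same_st.
Qed.

Lemma knows_edge_A_chain r m q : t < n -> isrun r ->
  knows_edge A (r, m) q -> chain (believes_edge N) 3 (r, m) q.
Proof.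
move=> lt_tn r_run; case: q => r1 m1 [i [Ai r1_run same_state]].
have [r' [r'_run Ni same_st N_sub]] := revive r_run Ai.
have Ai1 := Aset_lstate r_run r1_run same_state Ai.
have [r1' [r1'_run Ni1 same_st1 N_sub1]] := revive r1_run Ai1.
have [r_r' _] := believes_edge_same_state lt_tn r_run r'_run same_st N_sub.
have [_ r1'_r1] := believes_edge_same_state lt_tn r1_run r1'_run same_st1 N_sub1.
have r'_r1' : believes_edge N (r', m) (r1', m1).
  by exists i; split=> //; rewrite /lstate /= same_st1 same_st; exact: same_state.
by exists (r', m); split=> //; exists (r1', m1); split=> //; exists (r1, m1).
Qed.

Lemma knows_chain_A_believes_chain_N k p q : t < n -> isrun p.1 ->
  chain (knows_edge A) k.+1 p q -> exists k', chain (believes_edge N) k'.+1 p q.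
Proof.
move=> lt_tn; elim: k p => [|k IH] [r m] r_run /= [p1 [Ap1 p1q]].
  by exists 2; rewrite p1q; apply: knows_edge_A_chain.
have [|k' Np1q] := IH p1 _ p1q; first by case: Ap1 => i [].
by exists k'.+3; exact: chain_cat (knows_edge_A_chain lt_tn r_run Ap1) Np1q.
Qed.

Lemma CK_A_iff_CB_N r m v : t < n -> isrun r ->
  CKA (decidesS n V E P Le A v) (r, m) <-> CBN (decidesS n V E P Le N v) (r, m).
Proof.
move=> lt_tn r_run; split=> [CK_dec k k_gt0|CB_dec [//|k] _].
  apply/iter_EB_chain => q rq j Nj.
  have rq' := chain_mono believes_edge_N_knows_edge_A rq.
  exact: (iter_Eall_chain _ _ _ _).1 (CK_dec k k_gt0) q rq' j (Nset_Aset Nj).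
apply/iter_Eall_chain => -[r1 m1] rq j Aj.
have [k' Nrq] := knows_chain_A_believes_chain_N (p := (r, m)) lt_tn r_run rq.
have r1_run : isrun r1.
  by apply: (chain_last (Q := fun q : point => isrun q.1)) rq => u w [i []].
have [r1' [r1'_run Nj same_st N_sub]] := revive r1_run Aj.
have [r1_r1' _] := believes_edge_same_state lt_tn r1_run r1'_run same_st N_sub.
have Nrq' : chain (believes_edge N) (k'.+1 + 1) (r, m) (r1', m1).
  by apply: chain_cat Nrq _; exists (r1', m1).
have := (iter_EB_chain _ _ _ _).1 (CB_dec (k'.+1 + 1) isT) _ Nrq' j Nj.
by rewrite /decides /lstate /= same_st.
Qed.

Lemma CK_A_same_state r r' m phi : isrun r -> isrun r' -> (r' m).2 = (r m).2 ->
  CKA phi (r', m) -> CKA phi (r, m).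
Proof.
move=> r_run r'_run same_st CK_phi [//|k] _.
apply/iter_Eall_chain => q [p1 [[j [Aj p1_run same_state]] p1q]].
have r'_p1 : knows_edge A (r', m) p1.
  have same_state' : lstate j p1 = lstate j (r', m).
    by rewrite same_state /lstate /= same_st.
  by exists j; split=> //; apply: Aset_lstate Aj; rewrite // /lstate /= same_st.
exact: (iter_Eall_chain _ _ _ _).1 (CK_phi k.+1 isT) q (ex_intro _ p1 (conj r'_p1 p1q)).
Qed.

End CrashRuns.

Theorem proposition9 (n t : nat) (V : Type) (E : InfoExchange n V)
  (P : 'I_n -> lst E -> action V)
  (Le : Type) (Ie : Le -> Prop) (de : Le -> ('I_n -> action V) -> Le) :
  t < n ->
  (forall i, P i (crashed E) = noop) ->
  SBA_N_valid n t V E P Le Ie de ->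
  forall (i : 'I_n) (v : V),
    valid n t V E P Le Ie de (fun p =>
      CK n t V E P Le Ie de (Aset n V E P Le) (decidesS n V E P Le (Aset n V E P Le) v) p
      <-> CB n t V E P Le Ie de (Nset n V E P Le) (decidesS n V E P Le (Nset n V E P Le) v) p)
    /\
    valid n t V E P Le Ie de (fun p =>
      Aset n V E P Le p i ->
      (Kn n t V E P Le Ie de i
         (CK n t V E P Le Ie de (Aset n V E P Le) (decidesS n V E P Le (Aset n V E P Le) v)) p
       <-> Bel n t V E P Le Ie de (Nset n V E P Le) i
         (CB n t V E P Le Ie de (Nset n V E P Le) (decidesS n V E P Le (Nset n V E P Le) v)) p)).
Proof.
move=> lt_tn _ _ i v; split=> [r m r_run|r m r_run Ai]; first exact: CK_A_iff_CB_N.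
split=> [K_CK r1 m1 r1_run same_state _|B_CB r1 m1 r1_run same_state].
  by apply/CK_A_iff_CB_N => //; apply: K_CK.
have [r1' [r1'_run Ni same_st _]] := revive r1_run (Aset_lstate r_run r1_run same_state Ai).
have same_state' : lstate n V E Le i (r1', m1) = lstate n V E Le i (r, m).
  by rewrite /lstate /= same_st; exact: same_state.
apply: (CK_A_same_state r1_run r1'_run same_st).
apply/(CK_A_iff_CB_N m1 v lt_tn r1'_run).
exact: B_CB r1' m1 r1'_run same_state' Ni.
Qed.
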